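(* Fix $x\in\mathbb X$ and $\Lambda\Subset\mathbb X\setminus\{x\}$, a total order $\preceq$ on $\mathbf F(x)$, and a set $\mathbf E\subset\mathbf F(x)$ with $\mathbf E\supset\{X\in\mathbf F(x)\mid W(X)\neq1,\ X\setminus\{x\}\subset\Lambda\}$. Suppose that $Z(\Lambda)\neq0$ and, unless $z(x)W(x)=0$, assume also $Z_X(\Lambda)\neq0$ for all $X\in\mathbf E$. Then \[ \widehat z(x,\Lambda)=z(x)W(x)\prod_{X\in\mathbf E}\frac{Z_X(\Lambda\mid x)}{Z_X(\Lambda)}. \] In particular, if $z(x)=1$, then $\widehat z(x,\Lambda)=\prod_{X\in\mathbf E}\widehat z_X(x,\Lambda)$.
   Context: $\mathbb X$ is a finite or countably infinite set, $X\Subset\mathbb X$ means finite subset, $\mathbf F$ is the set of finite subsets of $\mathbb X$. Fix $z:\mathbb X\to\mathbb C$, $W:\mathbf F\to\mathbb C$; $f^X=\prod_{y\in X}f(y)$, $W(x)=W(\{x\})$; singletons $\{x\}$ are written $x$ inside arguments. For an interaction $V:\mathbf F\to\mathbb C$, the conditional interaction is $V(X\mid B)=\prod_{C\subset B}V(X\cup C)$ if $X\cap B=\varnothing$, $V(X\mid B)=0$ if $X=\{y\}$ with $y\in B$, and $V(X\mid B)=1$ otherwise; the Boltzmann factor is $\kappa(X\mid B)=\prod_{\varnothing\neq S\subset X}V(S\mid B)$; partition functions are $Z(X,\Lambda\mid B)=\sum_{Y\subset\Lambda\setminus X}z^{X\cup Y}\kappa(X\cup Y\mid B)$, $Z(\Lambda\mid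 B)=Z(\varnothing,\Lambda\mid B)$, with $B$ omitted when $B=\varnothing$; correlations $R(X,\Lambda\mid B)=Z(X,\Lambda\mid B)/Z(\Lambda\mid B)$ when the denominator is nonzero, and effective activities $\widehat z(y,\Lambda\mid B)=R(\{y\},\Lambda\mid B)$ for $y\notin\Lambda$. Unadorned $\kappa,Z,R,\widehat z$ refer to $V=W$. Let $\mathbf F(x)=\{X\Subset\mathbb X\mid x\in X\}$ and $X'=X\setminus\{x\}$. Given the total order $\preceq$ on $\mathbf F(x)$ (with strict part $\prec$) and $X\in\mathbf F(x)$, define $W_X:\mathbf F\to\mathbb C$ by $W_X(Y)=W(Y)W(\{x\}\cup Y)$ if $x\notin Y$ and $\{x\}\cup Y\prec X$; $W_X(Y)=1$ if $x\in Y$ and $Y\neq X$; $W_X(Y)=W(Y)$ otherwise. Quantities built from $V=W_X$ are written $\kappa_X,Z_X,R_X,\widehat z_X$. Convention: a product is set equal to $0$ if at least one factor is well defined and equals $0$, even if other factors are ill-defined. *)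

From HB Require Import structures.
From mathcomp Require Import all_boot all_order all_algebra.
From mathcomp Require Import finmap.
Set Implicit Arguments. Unset Strict Implicit. Unset Printing Implicit Defensive.
Import Order.TTheory GRing.Theory.
Local Open Scope ring_scope.
Local Open Scope fset_scope.

Section Defs.
Variables (C : fieldType) (T : countType).

Definition fpow (f : T -> C) (X : {fset T}) : C := \prod_(y <- X) f y.

Definition cond_int (V : {fset T} -> C) (B X : {fset T}) : C :=
  if [disjoint X & B]%fset then \prod_(D <- fpowerset B) V (X `|` D)
  else if (#|` X| == 1)%N && (X `<=` B) then 0 else 1.

Definition kappa (V : {fset T} -> C) (B X : {fset T}) : C :=
  \prod_(S <- fpowerset X | S != fset0) cond_int V B S.

Definition Zpart (z : T -> C) (V : {fset T} -> C) (X Lam B : {fset T}) : C :=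
  \sum_(Y <- fpowerset (Lam `\` X)) fpow z (X `|` Y) * kappa V B (X `|` Y).

Definition Zfun (z : T -> C) (V : {fset T} -> C) (Lam B : {fset T}) : C :=
  Zpart z V fset0 Lam B.

Definition qopt (a b : C) : option C := if b == 0 then None else Some (a / b).

Definition Rcorr (z : T -> C) (V : {fset T} -> C) (X Lam B : {fset T}) : option C :=
  qopt (Zpart z V X Lam B) (Zfun z V Lam B).

Definition zhat (z : T -> C) (V : {fset T} -> C) (y : T) (Lam B : {fset T}) : option C :=
  Rcorr z V [fset y] Lam B.

Definition strict (ord : rel {fset T}) (A B : {fset T}) : bool := ord A B && (A != B).

Definition WX (ord : rel {fset T}) (W : {fset T} -> C) (x : T) (X Y : {fset T}) : C :=
  if (x \notin Y) && strict ord (x |` Y) X then W Y * W (x |` Y)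
  else if (x \in Y) && (Y != X) then 1
  else W Y.
End Defs.

Definition total_order_on {A : Type} (P : A -> Prop) (r : rel A) : Prop :=
  [/\ (forall a, P a -> r a a),
      (forall a b, P a -> P b -> r a b -> r b a -> a = b),
      (forall a b c, P a -> P b -> P c -> r a b -> r b c -> r a c)
    & (forall a b, P a -> P b -> r a b || r b a)].

(* Product over a possibly infinite index set E of possibly ill-defined factors F a
   (None = ill-defined), with the paper's convention: the product is 0 if some
   factor is well defined and equals 0 (even if other factors are ill-defined);
   otherwise all factors must be defined and all but finitely many equal to 1,
   and the product is the finite product of the remaining ones.
   [prod_conv E F v] means "the product equals v". *)
Definition prod_conv {C : fieldType} {A : eqType} (E : A -> Prop)
  (F : A -> option C) (v : C) : Prop :=
  ((exists a, E a /\ F a = Some 0) /\ v = 0) \/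
  ((forall a, E a -> F a <> None) /\
   exists s : seq A, [/\ uniq s, (forall a, a \in s -> E a),
                        (forall a, E a -> a \notin s -> F a = Some 1)
                      & v = \prod_(a <- s) odflt 0 (F a)]).

From HB Require Import structures.
From mathcomp Require Import all_boot all_order all_algebra.
From mathcomp Require Import finmap.
Import Order.TTheory GRing.Theory.
Local Open Scope ring_scope.
Local Open Scope fset_scope.

(* Splitting off the site x from the Boltzmann factor of {x} ∪ Y gives
   Z({x}, Λ) = z(x) W(x) Z(Λ | x).  All partition functions in the statement
   are instances of one sum [Zwith P] over Y ⊆ Λ, in which each nonempty S ⊆ Y
   carries the extra factor W(x ∪ S) exactly when P (x ∪ S) holds:
   P = false, true, (≺ X), (⪯ X) give Z(Λ), Z(Λ | x), Z_X(Λ), Z_X(Λ | x).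
   Only the finitely many X with W(X) ≠ 1 and X \ x ⊆ Λ influence [Zwith P].
   Listing them increasingly, the numerator Z_X(Λ | x) of each ratio is the
   denominator Z_X'(Λ) of the next one, so the product telescopes to
   Z(Λ | x) / Z(Λ), while every other factor equals 1.  If W(x) = 0, when no
   Z_X(Λ) is known to be nonzero, the factor of X = {x} or else the first ratio
   in this list whose numerator vanishes is a well-defined zero factor. *)

Section RatioTelescope.
Variables (F : fieldType) (g : nat -> F).

Lemma prod_ratio_telescope n : g 0 != 0 -> (forall k, (k < n)%N -> g k != 0) ->
  \prod_(k < n) (g k.+1 / g k) = g n / g 0.
Proof.
move=> g0 gk; elim: n gk => [|n IHn] gk; first by rewrite big_ord0 divff.
rewrite big_ord_recr /= IHn => [|k kn]; last by apply: gk; rewrite ltnS ltnW.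
by rewrite mulrC mulrA divfK ?gk.
Qed.

Lemma exists_ratio_zero n : g 0 != 0 -> g n = 0 ->
  exists k, [/\ (k < n)%N, g k != 0 & g k.+1 = 0].
Proof.
move=> g0; elim: n => [|n IHn] gn; first by rewrite gn eqxx in g0.
have [gn0|gn0] := eqVneq (g n) 0; last by exists n.
by have [k [kn gk gk1]] := IHn gn0; exists k; rewrite ltnS ltnW.
Qed.
End RatioTelescope.

Section SortedChain.
Context {A : eqType} {P : A -> Prop} {ord : rel A} {t : seq A}.
Hypotheses (ord_total : total_order_on P ord) (Pt : forall a, a \in t -> P a).
Hypothesis t_sorted : sorted ord t.

Lemma sorted_ord_index : {in t &, forall a b, ord a b = (index a t <= index b t)%N}.
Proof.
have [refl anti trans _] := ord_total.
have trans_t : {in mem t & &, transitive ord}.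
  by move=> c d e /Pt ? /Pt ? /Pt ?; apply: trans.
have refl_t : {in mem t, reflexive ord} by move=> c /Pt; apply: refl.
move=> a b ta tb.
have [ia ib] : (index a t < size t)%N /\ (index b t < size t)%N by rewrite !index_mem.
have /= le_nth := sorted_leq_nth_in trans_t refl_t a (allss t) t_sorted _ _ ia ib.
have /= lt_nth := sorted_ltn_nth_in trans_t a (allss t) t_sorted _ _ ib ia.
rewrite !nth_index // in le_nth lt_nth.
apply/idP/idP => [ord_ab|/le_nth //]; rewrite leqNgt; apply/negP => ba.
have eq_ab := anti _ _ (Pt _ ta) (Pt _ tb) ord_ab (lt_nth ba).
by rewrite eq_ab ltnn in ba.
Qed.

Lemma sorted_strict_index :
  {in t &, forall a b, ord a b && (a != b) = (index a t < index b t)%N}.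
Proof.
move=> a b ta tb; rewrite sorted_ord_index // ltn_neqAle andbC; congr (_ && _).
by apply/negb_inj; rewrite !negbK; apply/eqP/eqP => [->//|]; apply: index_inj.
Qed.
End SortedChain.

Lemma prod_conv_zero {F : fieldType} {A : eqType} {E : A -> Prop} {f : A -> option F} {a : A} :
  E a -> f a = Some 0 -> prod_conv E f 0.
Proof. by move=> Ea fa0; left; split=> //; exists a. Qed.

Lemma prod_conv_seq {F : fieldType} {A : eqType} {E : A -> Prop} {f : A -> option F}
    {s : seq A} {v : A -> F} :
  uniq s -> (forall a, a \in s -> E a) -> (forall a, E a -> f a = Some (v a)) ->
  (forall a, E a -> a \notin s -> v a = 1) ->
  prod_conv E f (\prod_(a <- s) v a).
Proof.
move=> s_uniq sE fv v1; right; split=> [a /fv -> //|]; exists s; split=> //.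
  by move=> a Ea aNs; rewrite fv // v1.
by apply: eq_big_seq => a /sE /fv ->.
Qed.

Lemma big_fpowersetU1 (R : Type) (idx : R) (op : Monoid.com_law idx) (K : choiceType)
    (x : K) (Y : {fset K}) (h : {fset K} -> R) : x \notin Y ->
  \big[op/idx]_(S <- fpowerset (x |` Y)) h S =
  op (\big[op/idx]_(S <- fpowerset Y) h S) (\big[op/idx]_(S <- fpowerset Y) h (x |` S)).
Proof.
move=> xNY.
have xNS S : S `<=` Y -> x \notin S by move=> /fsubsetP SY; apply: contra xNY => /SY.
rewrite (big_fsetID _ (fun S : {fset K} => x \in S)) [RHS]Monoid.mulmC; congr (op _ _).
  rewrite (@eq_fbigl _ _ _ _ _ [fset x |` S | S in fpowerset Y]); last first.
    move=> U; rewrite !inE /= fpowersetE; apply/idP/imfsetP => [/andP[UxY xU]|[S]].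
      exists (U `\ x); first by rewrite /= fpowersetE fsubDset.
      by rewrite fsetD1K.
    by rewrite /= fpowersetE => SY ->; rewrite fset1U1 andbT fsetUS.
  rewrite big_imfset // => S1 S2; rewrite /= !fpowersetE => S1Y S2Y eq12.
  by rewrite -(fsetU1K (xNS _ S1Y)) eq12 fsetU1K // xNS.
apply: eq_fbigl => S; rewrite !inE /= !fpowersetE.
apply/andP/idP => [[SxY xNS']|SY]; last by rewrite xNS // (fsubset_trans SY (fsubsetU1 _ _)).
apply/fsubsetP => a aS; have := fsubsetP SxY a aS; rewrite !inE.
by case/orP => // /eqP ax; rewrite -ax aS in xNS'.
Qed.

Section BoltzmannFactor.
Variables (C : fieldType) (T : countType).

Lemma cond_int_set0 (V : {fset T} -> C) S : cond_int V fset0 S = V S.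
Proof. by rewrite /cond_int fdisjointX0 fpowerset0 big_seq_fset1 fsetU0. Qed.

Lemma cond_int_set1 (V : {fset T} -> C) x S : x \notin S ->
  cond_int V [fset x] S = V S * V (x |` S).
Proof.
move=> xNS; rewrite /cond_int fdisjointX1 xNS fpowerset1 big_fsetU1; last first.
  by rewrite inE; apply/eqP => /fsetP /(_ x); rewrite !inE eqxx.
by rewrite big_seq_fset1 fsetU0 fsetUC.
Qed.

Lemma kappa_fsetU1 (V : {fset T} -> C) x Y : x \notin Y ->
  kappa V fset0 (x |` Y) = V [fset x] * kappa V [fset x] Y.
Proof.
move=> xNY.
have xNS S : S `<=` Y -> x \notin S by move=> /fsubsetP SY; apply: contra xNY => /SY.
have xS_neq0 S : (x |` S != fset0) by apply/eqP => /fsetP/(_ x); rewrite !inE eqxx.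
rewrite /kappa (eq_bigr V) => [|S _]; last by rewrite cond_int_set0.
rewrite big_mkcond big_fpowersetU1 //= -big_mkcond.
rewrite [in RHS]big_seq_cond [in RHS](eq_bigr (fun S => V S * V (x |` S))) => [|S]; last first.
  by rewrite fpowersetE => /andP[/xNS xNS' _]; apply: cond_int_set1.
rewrite -big_seq_cond big_split /= mulrCA; congr (_ * _).
under eq_bigr do rewrite xS_neq0.
by rewrite (bigD1_seq fset0) ?fset_uniq ?fpowersetE ?fsub0set //= fsetU0.
Qed.

Lemma Zpart_set1 (z : T -> C) (V : {fset T} -> C) x Lam : x \notin Lam ->
  Zpart z V [fset x] Lam fset0 = z x * V [fset x] * Zfun z V Lam [fset x].
Proof.
move=> xNLam; rewrite /Zfun /Zpart mem_fsetD1 // fsetD0 big_distrr /=.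
apply: eq_big_seq => Y; rewrite fpowersetE => YLam.
have xNY : x \notin Y by apply: contra xNLam => /(fsubsetP YLam).
by rewrite fset0U kappa_fsetU1 // /fpow big_fsetU1 // mulrACA.
Qed.
End BoltzmannFactor.

Section Factorization.
Context {C : fieldType} {T : countType} {z : T -> C} {W : {fset T} -> C}.
Context {x : T} {Lam : {fset T}} {ord : rel {fset T}}.
Hypotheses (xNLam : x \notin Lam) (ord_total : total_order_on (fun X : {fset T} => x \in X) ord).

Definition Zwith (P : {fset T} -> bool) : C :=
  \sum_(Y <- fpowerset Lam) fpow z Y *
    \prod_(S <- fpowerset Y | S != fset0) (W S * (if P (x |` S) then W (x |` S) else 1)).

Lemma notin_subLam {S : {fset T}} : S `<=` Lam -> x \notin S.
Proof. by move=> /fsubsetP SLam; apply: contra xNLam => /SLam. Qed.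

Lemma Zfun_Zwith V B P :
  (forall S, S `<=` Lam -> S != fset0 ->
     cond_int V B S = W S * (if P (x |` S) then W (x |` S) else 1)) ->
  Zfun z V Lam B = Zwith P.
Proof.
move=> VP; rewrite /Zfun /Zpart /Zwith fsetD0; apply: eq_big_seq => Y.
rewrite fpowersetE fset0U => YLam; congr (_ * _); rewrite /kappa.
rewrite big_seq_cond [RHS]big_seq_cond; apply: eq_bigr => S /andP[].
by rewrite fpowersetE => SY S_neq0; apply: VP => //; apply: fsubset_trans SY YLam.
Qed.

Lemma Zfun_W0 : Zfun z W Lam fset0 = Zwith xpred0.
Proof. by apply: Zfun_Zwith => S _ _; rewrite cond_int_set0 mulr1. Qed.

Lemma Zfun_Wx : Zfun z W Lam [fset x] = Zwith xpredT.
Proof. by apply: Zfun_Zwith => S SLam _; rewrite cond_int_set1 // notin_subLam. Qed.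

Lemma Zfun_WX0 X : Zfun z (WX ord W x X) Lam fset0 = Zwith (fun U => strict ord U X).
Proof.
apply: Zfun_Zwith => S SLam _; rewrite cond_int_set0 /WX (notin_subLam SLam) /=.
by case: ifP => // _; rewrite (negbTE (notin_subLam SLam)) mulr1.
Qed.

Lemma Zfun_WXx X : x \in X -> Zfun z (WX ord W x X) Lam [fset x] = Zwith (fun U => ord U X).
Proof.
have [refl _ _ _] := ord_total; move=> xX.
apply: Zfun_Zwith => S SLam _; have xNS := notin_subLam SLam.
rewrite cond_int_set1 // /WX (negbTE xNS) fset1U1 /= /strict.
have [->|ne] := eqVneq (x |` S) X; first by rewrite andbF refl.
by rewrite andbT mulr1; case: ifP; rewrite ?mulr1.
Qed.

Lemma WX_set1 X : WX ord W x X [fset x] = if X == [fset x] then W [fset x] else 1.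
Proof. by rewrite /WX fset11 /= eq_sym; have [->|] := eqVneq [fset x] X; rewrite ?eqxx. Qed.

Lemma zhat_W : Zfun z W Lam fset0 != 0 ->
  zhat z W x Lam fset0 = Some (z x * W [fset x] * (Zwith xpredT / Zwith xpred0)).
Proof.
rewrite /zhat /Rcorr /qopt Zpart_set1 // Zfun_Wx Zfun_W0 => /negbTE ->.
by rewrite mulrA.
Qed.

Lemma zhat_WX X : x \in X -> zhat z (WX ord W x X) x Lam fset0 =
  qopt (z x * WX ord W x X [fset x] * Zwith (fun U => ord U X))
       (Zwith (fun U => strict ord U X)).
Proof. by move=> xX; rewrite /zhat /Rcorr Zpart_set1 // Zfun_WXx // Zfun_WX0. Qed.

Definition relevant : seq {fset T} :=
  [seq x |` Y | Y <- fpowerset Lam & W (x |` Y) != 1].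

Lemma mem_relevant U : (U \in relevant) = [&& x \in U, U `\ x `<=` Lam & W U != 1].
Proof.
apply/mapP/idP => [[S]|/and3P[xU ULam WU]].
  rewrite mem_filter fpowersetE => /andP[WS SLam] ->.
  by rewrite fset1U1 fsetU1K ?notin_subLam // SLam WS.
exists (U `\ x); last by rewrite fsetD1K.
by rewrite mem_filter fpowersetE fsetD1K // WU ULam.
Qed.

Lemma uniq_relevant : uniq relevant.
Proof.
rewrite map_inj_in_uniq ?filter_uniq ?fset_uniq //.
move=> S1 S2; rewrite !mem_filter !fpowersetE => /andP[_ S1Lam] /andP[_ S2Lam] eq12.
by rewrite -(fsetU1K (notin_subLam S1Lam)) eq12 fsetU1K // notin_subLam.
Qed.

Lemma relevant_x X : X \in relevant -> x \in X.
Proof. by rewrite mem_relevant => /andP[]. Qed.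

Lemma WX_set1_irrelevant {X : {fset T}} : X \notin relevant -> WX ord W x X [fset x] = 1.
Proof.
rewrite WX_set1; have [->|//] := eqVneq X [fset x].
by rewrite mem_relevant fset11 fsetDv fsub0set => /negPn/eqP.
Qed.

Lemma eq_Zwith P Q : {in relevant, P =1 Q} -> Zwith P = Zwith Q.
Proof.
move=> PQ; apply: eq_big_seq => Y; rewrite fpowersetE => YLam; congr (_ * _).
rewrite big_seq_cond [RHS]big_seq_cond; apply: eq_bigr => S /andP[].
rewrite fpowersetE => SY _; have SLam := fsubset_trans SY YLam.
have [->|WS] := eqVneq (W (x |` S)) 1; first by case: ifP; case: ifP.
by rewrite PQ // mem_relevant fset1U1 fsetU1K ?notin_subLam // SLam WS.
Qed.

Lemma Zwith_ord_irrelevant X : X \notin relevant ->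
  Zwith (fun U => ord U X) = Zwith (fun U => strict ord U X).
Proof.
move=> XNrel; apply: eq_Zwith => U Urel; rewrite /strict.
by have [UX|_] := eqVneq U X; [rewrite -UX Urel in XNrel | rewrite andbT].
Qed.

Lemma prod_WX_set1 : \prod_(X <- relevant) WX ord W x X [fset x] = W [fset x].
Proof.
have [xrel|xNrel] := boolP ([fset x] \in relevant).
  rewrite (bigD1_seq [fset x]) ?uniq_relevant //= WX_set1 eqxx big1 ?mulr1 //.
  by move=> X XNx; rewrite WX_set1 (negbTE XNx).
rewrite big1_seq => [|X /andP[_ Xrel]].
  by rewrite -(WX_set1_irrelevant xNrel) WX_set1 eqxx.
by rewrite WX_set1; case: eqVneq => // Xx; rewrite -Xx Xrel in xNrel.
Qed.

Definition chain : seq {fset T} := sort ord relevant.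

Definition Zchain k : C := Zwith (fun U => U \in take k chain).

Lemma mem_chain : chain =i relevant.
Proof. exact: mem_sort. Qed.

Lemma uniq_chain : uniq chain.
Proof. by rewrite sort_uniq uniq_relevant. Qed.

Lemma sorted_chain : sorted ord chain.
Proof.
have [_ _ _ total] := ord_total.
apply: (sort_sorted_in (P := mem relevant)) (allss _) => X Y /relevant_x xX /relevant_x xY.
exact: total.
Qed.

Lemma chain_x X : X \in chain -> x \in X.
Proof. by rewrite mem_chain; apply: relevant_x. Qed.

Lemma Zwith_ord_nth k : (k < size chain)%N ->
  Zwith (fun U => ord U (nth fset0 chain k)) = Zchain k.+1.
Proof.
move=> k_lt; apply: eq_Zwith => U; rewrite -mem_chain => Uc.
rewrite (sorted_ord_index ord_total chain_x sorted_chain) ?mem_nth //.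
by rewrite index_uniq ?uniq_chain // in_take.
Qed.

Lemma Zwith_strict_nth k : (k < size chain)%N ->
  Zwith (fun U => strict ord U (nth fset0 chain k)) = Zchain k.
Proof.
move=> k_lt; apply: eq_Zwith => U; rewrite -mem_chain => Uc.
rewrite /strict (sorted_strict_index ord_total chain_x sorted_chain) ?mem_nth //.
by rewrite index_uniq ?uniq_chain // in_take.
Qed.

Lemma Zchain0 : Zchain 0 = Zwith xpred0.
Proof. by rewrite /Zchain take0. Qed.

Lemma Zchain_size : Zchain (size chain) = Zwith xpredT.
Proof. by rewrite /Zchain take_size; apply: eq_Zwith => U /=; rewrite mem_chain => ->. Qed.

Lemma prod_relevant_ratio :
  Zwith xpred0 != 0 -> (forall X, X \in relevant -> Zwith (fun U => strict ord U X) != 0) ->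
  \prod_(X <- relevant) (Zwith (fun U => ord U X) / Zwith (fun U => strict ord U X)) =
  Zwith xpredT / Zwith xpred0.
Proof.
move=> Z0_neq0 ZX_neq0.
rewrite -(perm_big _ (permEl (perm_sort ord relevant))) -/chain (big_nth fset0) big_mkord.
rewrite (eq_bigr (fun k : 'I__ => Zchain k.+1 / Zchain k)) => [|k _]; last first.
  by rewrite Zwith_ord_nth ?Zwith_strict_nth.
rewrite prod_ratio_telescope ?Zchain_size ?Zchain0 // => k k_lt.
by rewrite -Zwith_strict_nth // ZX_neq0 // -mem_chain mem_nth.
Qed.

Lemma exists_relevant_ratio_zero X : X \in relevant ->
  Zwith xpred0 != 0 -> Zwith (fun U => strict ord U X) = 0 ->
  exists2 Y, Y \in relevant &
    [/\ Y != X, Zwith (fun U => ord U Y) = 0 & Zwith (fun U => strict ord U Y) != 0].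
Proof.
rewrite -mem_chain => Xc Z0_neq0 ZX0.
have j_lt : (index X chain < size chain)%N by rewrite index_mem.
have Zj0 : Zchain (index X chain) = 0 by rewrite -Zwith_strict_nth // nth_index.
have Z0chain_neq0 : Zchain 0 != 0 by rewrite Zchain0.
have [k [kj Zk_neq0 Zk1]] := @exists_ratio_zero _ Zchain _ Z0chain_neq0 Zj0.
have k_lt := ltn_trans kj j_lt.
exists (nth fset0 chain k); first by rewrite -mem_chain mem_nth.
split; rewrite ?Zwith_ord_nth ?Zwith_strict_nth //.
by rewrite -(nth_index fset0 Xc) nth_uniq ?uniq_chain // ltn_eqF.
Qed.

Section ProductOverE.
Context {E : {fset T} -> Prop}.
Hypotheses (E_x : forall X, E X -> x \in X)
  (E_nontrivial : forall X : {fset T}, x \in X -> W X != 1 -> X `\ x `<=` Lam -> E X)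
  (Z_neq0 : Zfun z W Lam fset0 != 0).

Lemma relevant_E X : X \in relevant -> E X.
Proof. by rewrite mem_relevant => /and3P[xX XLam WX_neq1]; apply: E_nontrivial. Qed.

Lemma prod_conv_Zratio :
  (forall X, E X -> Zfun z (WX ord W x X) Lam fset0 != 0) ->
  prod_conv E (fun X => qopt (Zfun z (WX ord W x X) Lam [fset x])
                             (Zfun z (WX ord W x X) Lam fset0))
            (Zwith xpredT / Zwith xpred0).
Proof.
move=> ZX_neq0; have Z0_neq0 : Zwith xpred0 != 0 by rewrite -Zfun_W0.
have Zlt_neq0 X : E X -> Zwith (fun U => strict ord U X) != 0.
  by rewrite -Zfun_WX0; apply: ZX_neq0.
rewrite -prod_relevant_ratio => [|//|X /relevant_E /Zlt_neq0 //].
apply: prod_conv_seq => [|||X EX XNrel].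
- exact: uniq_relevant.
- exact: relevant_E.
- by move=> X EX; rewrite /qopt Zfun_WXx ?E_x // Zfun_WX0 (negbTE (Zlt_neq0 X EX)).
- by rewrite Zwith_ord_irrelevant // divff ?Zlt_neq0.
Qed.

Lemma prod_conv_zhatWX : z x = 1 ->
  (W [fset x] != 0 -> forall X, E X -> Zfun z (WX ord W x X) Lam fset0 != 0) ->
  prod_conv E (fun X => zhat z (WX ord W x X) x Lam fset0)
            (W [fset x] * (Zwith xpredT / Zwith xpred0)).
Proof.
move=> zx1 ZX_neq0; have Z0_neq0 : Zwith xpred0 != 0 by rewrite -Zfun_W0.
have [Wx0|Wx_neq0] := eqVneq (W [fset x]) 0.
  have xrel : [fset x] \in relevant.
    by rewrite mem_relevant fset11 fsetDv fsub0set Wx0 eq_sym oner_eq0.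
  rewrite Wx0 mul0r.
  have [Zlt0|Zlt_neq0] := eqVneq (Zwith (fun U => strict ord U [fset x])) 0.
    have [Y Yrel [_ ZY0 ZY_neq0]] := exists_relevant_ratio_zero _ xrel Z0_neq0 Zlt0.
    apply: (prod_conv_zero (relevant_E _ Yrel)).
    by rewrite zhat_WX ?relevant_x // /qopt (negbTE ZY_neq0) ZY0 mulr0 mul0r.
  apply: (prod_conv_zero (relevant_E _ xrel)).
  by rewrite zhat_WX ?fset11 // /qopt (negbTE Zlt_neq0) WX_set1 eqxx Wx0 mulr0 !mul0r.
have Zlt_neq0 X : E X -> Zwith (fun U => strict ord U X) != 0.
  by rewrite -Zfun_WX0; apply: ZX_neq0.
rewrite -prod_WX_set1 -prod_relevant_ratio => [|//|X /relevant_E /Zlt_neq0 //].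
rewrite -big_split /=; apply: prod_conv_seq => [|||X EX XNrel].
- exact: uniq_relevant.
- exact: relevant_E.
- by move=> X EX; rewrite zhat_WX ?E_x // /qopt (negbTE (Zlt_neq0 X EX)) zx1 mul1r mulrA.
- by rewrite WX_set1_irrelevant // Zwith_ord_irrelevant // divff ?Zlt_neq0 // mulr1.
Qed.
End ProductOverE.
End Factorization.

Theorem lemma4p1 (C : fieldType) (T : countType) (z : T -> C) (W : {fset T} -> C)
  (x : T) (Lam : {fset T}) (ord : rel {fset T}) (E : {fset T} -> Prop) :
  x \notin Lam ->
  total_order_on (fun X : {fset T} => x \in X) ord ->
  (forall X, E X -> x \in X) ->
  (forall X : {fset T}, x \in X -> W X != 1 -> X `\ x `<=` Lam -> E X) ->
  Zfun z W Lam fset0 != 0 ->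
  (z x * W [fset x] != 0 -> forall X, E X -> Zfun z (WX ord W x X) Lam fset0 != 0) ->
  (exists v : C, zhat z W x Lam fset0 = Some v /\
     (z x * W [fset x] = 0 -> v = 0) /\
     (z x * W [fset x] != 0 ->
        exists p : C,
          prod_conv E (fun X => qopt (Zfun z (WX ord W x X) Lam [fset x])
                                     (Zfun z (WX ord W x X) Lam fset0)) p
          /\ v = z x * W [fset x] * p))
  /\
  (z x = 1 ->
     exists v : C, zhat z W x Lam fset0 = Some v /\
       prod_conv E (fun X => zhat z (WX ord W x X) x Lam fset0) v).
Proof.
move=> xNLam ord_total E_x E_nontrivial Z_neq0 ZX_neq0.
have zhat_eq := zhat_W xNLam Z_neq0.
split.
  eexists; split; first exact: zhat_eq.
  split=> [-> | zWx_neq0]; first by rewrite !mul0r.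
  eexists; split; last reflexivity.
  exact: (prod_conv_Zratio xNLam ord_total E_x E_nontrivial Z_neq0 (ZX_neq0 zWx_neq0)).
move=> zx1; eexists; split; first exact: zhat_eq.
rewrite zx1 mul1r; apply: (prod_conv_zhatWX xNLam ord_total E_x E_nontrivial Z_neq0 zx1).
by move=> Wx_neq0; apply: ZX_neq0; rewrite zx1 mul1r.
Qed.
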